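(* Let $D$ be a finite set and $P:D^2\to\{0,1\}$ a binary predicate such that for any two-element subsets $B,C\subseteq D$, the restriction $P|_{B\times C}$ is not a singleton. Then for every $0<\varepsilon<1$ and every instance $I$ of $\mathrm{CSP}(P)$ on $n$ variables there is an $\varepsilon$-sparsifier of $I$ with $O(\varepsilon^{-2}n)$ constraints, where the implied constant does not depend on $I$, $n$ or $\varepsilon$.
   Context: A binary CSP instance is $I=(V,D,\Pi,w)$ where $V$ is a finite set of $n=|V|$ variables, $D$ a finite domain, $\Pi$ a set of constraints, each a pair $\langle (u,v),P\rangle$ with $u,v\in V$ distinct and $P:D^2\to\{0,1\}$, and $w:\Pi\to\mathbb{R}_{>0}$ positive weights. $\mathrm{CSP}(P)$ is the class of instances in which every constraint uses the predicate $P$. For an assignment $A:V\to D$, $\mathrm{Val}_I(A)=\sum_{\pi=\langle(u,v),P\rangle\in\Pi} w(\pi)P(A(u),A(v))$. For $0<\varepsilon<1$, an $\varepsilon$-sparsifier of $I$ is an instance $I_\varepsilon=(V,D,\Pi_\varepsilon,w_\varepsilon)$ with $\Pi_\varepsilon\subseteq\Pi$ and $w_\varepsilon:\Pi_\varepsilon\to\mathbb{R}_{>0}$ such that for every $A:V\to D$, $(1-\varepsilon)\mathrm{Val}_I(A)\le \mathrm{Val}_{I_\varepsilon}(A)\le(1+\varepsilon)\mathrm{Val}_I(A)$; its number of constraints is $|\Pi_\varepsilon|$. A predicate is a singleton if exactly one tuple is mapped to $1$. $P|_{B\times C}$ denotes the restriction of $P$ to $B\times C$. *)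

From mathcomp Require Import all_boot all_order all_algebra.
From mathcomp Require Import reals.
Set Implicit Arguments. Unset Strict Implicit. Unset Printing Implicit Defensive.
Import Order.TTheory GRing.Theory Num.Theory.
Local Open Scope ring_scope.

Definition binpred (D : finType) := D -> D -> bool.

Definition restr_singleton (D : finType) (P : binpred D) (B C : {set D}) : bool :=
  #|[set bc in setX B C | P bc.1 bc.2]| == 1%N.

(* An instance of CSP(P) on variable set V: since every constraint uses the
   same predicate P, a constraint <(u,v),P> is identified with the ordered
   pair (u,v), u <> v.  Pi is the set of constraints, w the weights
   (only the values on Pi matter, and they must be positive). *)
Definition wf_instance (R : realType) (V : finType)
  (Pi : {set V * V}) (w : V * V -> R) : Prop :=
  (forall c, c \in Pi -> c.1 != c.2) /\ (forall c, c \in Pi -> 0 < w c).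

Definition Val (R : realType) (V D : finType) (P : binpred D)
  (Pi : {set V * V}) (w : V * V -> R) (A : V -> D) : R :=
  \sum_(c in Pi) w c * (P (A c.1) (A c.2))%:R.

Definition is_sparsifier (R : realType) (V D : finType) (P : binpred D)
  (Pi : {set V * V}) (w : V * V -> R) (eps : R)
  (Pi' : {set V * V}) (w' : V * V -> R) : Prop :=
  Pi' \subset Pi /\ (forall c, c \in Pi' -> 0 < w' c) /\
  forall A : V -> D,
    (1 - eps) * Val P Pi w A <= Val P Pi' w' A /\
    Val P Pi' w' A <= (1 + eps) * Val P Pi w A.

From mathcomp Require Import all_boot all_order all_algebra.
From mathcomp Require Import reals.
From mathcomp Require Import ring lra.
Set Implicit Arguments. Unset Strict Implicit. Unset Printing Implicit Defensive.
Import Order.TTheory GRing.Theory Num.Theory.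
Local Open Scope ring_scope.

(* The hypothesis on 2 x 2 restrictions says exactly that the zero sets
   Z_a = {b | ~ P a b} of the rows of P are pairwise equal or disjoint.  Hence
   2 P(a, b) = [P(-, b) = 1] + sum_T ([Z_a = T] - [b in T, T a zero set])^2, so
   Val_I(A) is the quadratic form of a sum, over the constraints, of Gram
   matrices, evaluated at the one-hot encoding of A in dimension n |D|.  The
   barrier method of Batson, Spielman and Srivastava reweights k^2 n |D| of
   these Gram matrices so that the new sum lies between k(k-1) and (k+1)(k+4)
   times the old one; rescaling and taking k about 4/eps gives an
   eps-sparsifier with at most 49 |D| n / eps^2 constraints. *)

Section QuadraticForm.
Variables (R : realFieldType) (n : nat).
Implicit Types (M N : 'M[R]_n) (x y z : 'rV[R]_n).

Definition bform M x y : R := \tr (x *m M *m y^T).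
Definition qform M x : R := bform M x x.
Definition symmx M := M^T = M.
Definition psdmx M := forall x, 0 <= qform M x.
Definition pdmx M := forall x, x != 0 -> 0 < qform M x.

Lemma bformC M x y : symmx M -> bform M x y = bform M y x.
Proof. by move=> sM; rewrite /bform -mxtrace_tr !trmx_mul trmxK sM mulmxA. Qed.

Lemma bformBl M x y z : bform M (x - y) z = bform M x z - bform M y z.
Proof. by rewrite /bform !mulmxBl raddfB. Qed.

Lemma bformBr M x y z : bform M x (y - z) = bform M x y - bform M x z.
Proof. by rewrite /bform linearB mulmxBr raddfB. Qed.

Lemma bformZl a M x y : bform M (a *: x) y = a * bform M x y.
Proof. by rewrite /bform -!scalemxAl mxtraceZ. Qed.

Lemma bformZr a M x y : bform M x (a *: y) = a * bform M x y.
Proof. by rewrite /bform linearZ -scalemxAr mxtraceZ. Qed.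

Lemma qformD M N x : qform (M + N) x = qform M x + qform N x.
Proof. by rewrite /qform /bform mulmxDr mulmxDl mxtraceD. Qed.

Lemma qformB M N x : qform (M - N) x = qform M x - qform N x.
Proof. by rewrite /qform /bform mulmxBr mulmxBl raddfB. Qed.

Lemma qformZ a M x : qform (a *: M) x = a * qform M x.
Proof. by rewrite /qform /bform -scalemxAr -scalemxAl mxtraceZ. Qed.

Lemma qform_sum (I : finType) (F : I -> 'M[R]_n) x :
  qform (\sum_i F i) x = \sum_i qform (F i) x.
Proof. by rewrite /qform /bform mulmx_sumr mulmx_suml raddf_sum. Qed.

Lemma qform0 M : qform M 0 = 0.
Proof. by rewrite /qform /bform !mul0mx mxtrace0. Qed.

Lemma qform_subZ M x y a : symmx M ->
  qform M (x - a *: y) = qform M x - 2 * a * bform M x y + a ^+ 2 * qform M y.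
Proof.
by move=> sM; rewrite /qform bformBl !bformBr !bformZl !bformZr (bformC y x sM); ring.
Qed.

Lemma pdmx_psdmx M : pdmx M -> psdmx M.
Proof. by move=> pM x; have [->|/pM/ltW //] := eqVneq x 0; rewrite qform0. Qed.

Lemma pdmx_scale a M : 0 < a -> pdmx M -> pdmx (a *: M).
Proof. by move=> a_gt0 pM x x0; rewrite qformZ mulr_gt0 // pM. Qed.

Lemma pdmx_neq0 M : (0 < n)%N -> pdmx M -> M != 0.
Proof.
move=> n0 pM; apply/eqP => M0.
have e0 : (const_mx 1 : 'rV[R]_n) != 0.
  by apply/eqP => /matrixP /(_ 0 (Ordinal n0)); rewrite !mxE => /eqP; rewrite oner_eq0.
by have := pM _ e0; rewrite M0 /qform /bform mulmx0 mul0mx mxtrace0 ltxx.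
Qed.

Lemma pdmx_unit M : pdmx M -> M \in unitmx.
Proof.
move=> pM; rewrite -row_free_unit; apply: inj_row_free => x xM0.
apply/eqP/negPn/negP => /pM.
by rewrite /qform /bform xM0 mul0mx mxtrace0 ltxx.
Qed.

Lemma symmx_inv M : symmx M -> symmx (invmx M).
Proof. by rewrite /symmx trmx_inv => ->. Qed.

Lemma bform_invmx M x y : symmx M -> M \in unitmx ->
  bform M y (x *m invmx M) = \tr (y *m x^T).
Proof. by move=> sM uM; rewrite /bform trmx_mul trmx_inv sM mulmxA mulmxK. Qed.

Lemma qform_invmx M x : symmx M -> M \in unitmx ->
  qform (invmx M) x = qform M (x *m invmx M).
Proof. by move=> sM uM; rewrite /qform bform_invmx. Qed.

Lemma pdmx_inv M : symmx M -> pdmx M -> pdmx (invmx M).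
Proof.
move=> sM pM x x0; have uM := pdmx_unit pM.
rewrite qform_invmx //; apply: pM; apply/eqP => xM0; move/eqP: x0; apply.
by rewrite -(mulmxKV uM x) xM0 mul0mx.
Qed.

Lemma quadratic_ge0_discr (a b c : R) : 0 <= c ->
  (forall l, 0 <= a - 2 * l * b + l ^+ 2 * c) -> b ^+ 2 <= a * c.
Proof.
move=> c0 h; have [c_eq0|c_neq0] := eqVneq c 0.
  have [->|b0] := eqVneq b 0; first by rewrite expr0n c_eq0 mulr0.
  have := h ((a + 1) / (2 * b)); rewrite c_eq0 mulr0 addr0.
  have -> : a - 2 * ((a + 1) / (2 * b)) * b = -1 by field; rewrite b0 /=; lra.
  lra.
have c_gt0 : 0 < c by rewrite lt_def c_neq0 c0.
have := h (b / c).
have -> : a - 2 * (b / c) * b + (b / c) ^+ 2 * c = (a * c - b ^+ 2) / c by field.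
by rewrite pmulr_lge0 ?invr_gt0 // subr_ge0.
Qed.

Lemma bform_sqr_le M x y : symmx M -> psdmx M ->
  bform M x y ^+ 2 <= qform M x * qform M y.
Proof.
move=> sM pM; apply: quadratic_ge0_discr => [|l]; first exact: pM.
by rewrite -qform_subZ.
Qed.

End QuadraticForm.

Section Congruence.
Variables (R : realFieldType) (m n : nat).

Lemma qform_congr (S : 'M[R]_m) (Z : 'M[R]_(n, m)) x :
  qform (Z *m S *m Z^T) x = qform S (x *m Z).
Proof. by rewrite /qform /bform trmx_mul !mulmxA. Qed.

Lemma psdmx_congr (S : 'M[R]_m) (Z : 'M[R]_(n, m)) : psdmx S -> psdmx (Z *m S *m Z^T).
Proof. by move=> pS x; rewrite qform_congr. Qed.

End Congruence.

Lemma pdmx_congr (R : realFieldType) (n : nat) (S Z : 'M[R]_n) :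
  pdmx S -> Z \in unitmx -> pdmx (Z *m S *m Z^T).
Proof.
move=> pS uZ x x0; rewrite qform_congr; apply: pS; apply/eqP => xZ0.
by move/eqP: x0; apply; rewrite -(mulmxK uZ x) xZ0 mul0mx.
Qed.

Lemma qform_mul_invmx_le (R : realFieldType) (n : nat) (N X : 'M[R]_n) c z :
  symmx N -> pdmx N -> symmx X -> psdmx X ->
  0 <= c -> (forall y, qform X y <= c * qform N y) ->
  qform (X *m invmx N *m X) z <= c * qform X z.
Proof.
move=> sN pN sX pX c0 XN; have uN := pdmx_unit pN.
set y0 := z *m X *m invmx N.
have -> : qform (X *m invmx N *m X) z = qform N y0.
  by rewrite -{2}sX qform_congr qform_invmx.
have Ny0 : qform N y0 = bform X y0 z.
  by rewrite /qform bform_invmx // /bform trmx_mul sX mulmxA.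
have sq_le : qform N y0 ^+ 2 <= qform N y0 * (c * qform X z).
  rewrite {1}Ny0 mulrA [qform N y0 * c]mulrC.
  by apply: le_trans (bform_sqr_le y0 z sX pX) _; apply: ler_wpM2r.
have := pdmx_psdmx pN y0; have := mulr_ge0 c0 (pX z).
move: sq_le; set q := qform N y0; set p := c * qform X z; nra.
Qed.

Section Gram.
Variables (R : realFieldType) (n : nat).
Implicit Types (M N P S Y Z : 'M[R]_n) (x y : 'rV[R]_n).

Definition gram (J : finType) (g : J -> 'rV[R]_n) : 'M[R]_n := \sum_j (g j)^T *m g j.

Lemma mxtrace_mul11 (A B : 'M[R]_1) : \tr (A *m B) = \tr A * \tr B.
Proof. by rewrite !trace_mx11 mxE big_ord1. Qed.

Lemma invmx_resolvent M N : M \in unitmx -> N \in unitmx ->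
  invmx N = invmx M + invmx M *m (M - N) *m invmx M
            + invmx M *m (M - N) *m invmx N *m (M - N) *m invmx M.
Proof.
move=> uM uN.
have e1 : invmx N = invmx M + invmx M *m (M - N) *m invmx N.
  by rewrite mulmxBr mulmxBl mulVmx // mul1mx -(mulmxA (invmx M) N) mulmxV // mulmx1 addrC subrK.
have e2 : invmx N = invmx M + invmx N *m (M - N) *m invmx M.
  by rewrite mulmxBr mulmxBl mulVmx // mul1mx -(mulmxA (invmx N) M) mulmxV // mulmx1 addrC subrK.
by rewrite {1}e1 {1}e2 -addrA mulmxDr !mulmxA.
Qed.

Variables (J : finType) (g : J -> 'rV[R]_n).

Lemma symmx_gram : symmx (gram g).
Proof.
by rewrite /symmx /gram linear_sum; apply: eq_bigr => j _ /=; rewrite trmx_mul trmxK.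
Qed.

Lemma qform_gram x : qform (gram g) x = \sum_j \tr (g j *m x^T) ^+ 2.
Proof.
rewrite /gram qform_sum; apply: eq_bigr => j _.
rewrite /qform /bform mulmxA -mulmxA mxtrace_mul11 -(mxtrace_tr (x *m _)).
by rewrite trmx_mul trmxK expr2.
Qed.

Lemma psdmx_gram : psdmx (gram g).
Proof. by move=> x; rewrite qform_gram; apply: sumr_ge0 => j _; apply: sqr_ge0. Qed.

Lemma mxtrace_gram_mul S : \tr (gram g *m S) = \sum_j qform S (g j).
Proof.
by rewrite /gram mulmx_suml raddf_sum; apply: eq_bigr => j _ /=; rewrite -mulmxA mxtrace_mulC.
Qed.

Lemma mxtrace_gram_ge0 S : psdmx S -> 0 <= \tr (gram g *m S).
Proof. by move=> pS; rewrite mxtrace_gram_mul; apply: sumr_ge0. Qed.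

Lemma mxtrace_gram_gt0 S : gram g != 0 -> pdmx S -> 0 < \tr (gram g *m S).
Proof.
move=> g0 pS; have [j gj0] : exists j, g j != 0.
  apply/existsP; apply: contraNT g0 => /existsPn g0.
  by apply/eqP/big1 => j _; move/negPn/eqP: (g0 j) => ->; rewrite mulmx0.
rewrite mxtrace_gram_mul (bigD1 j) //=; apply: ltr_wpDr; last exact: pS.
by apply: sumr_ge0 => i _; apply: pdmx_psdmx.
Qed.

Lemma mxtrace_gram_congr_le P Y Z : psdmx (Z - Y) ->
  \tr (gram g *m (P *m Y *m P^T)) <= \tr (gram g *m (P *m Z *m P^T)).
Proof.
move=> pZY; rewrite -subr_ge0 -raddfB -mulmxBr -mulmxBl -mulmxBr.
exact/mxtrace_gram_ge0/psdmx_congr.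
Qed.

Lemma qform_gram_le_mxtrace M x : symmx M -> pdmx M ->
  qform (gram g) x <= \tr (gram g *m invmx M) * qform M x.
Proof.
move=> sM pM; have uM := pdmx_unit pM.
rewrite mxtrace_gram_mul mulr_suml qform_gram; apply: ler_sum => j _.
have := bform_sqr_le (g j *m invmx M) x sM (pdmx_psdmx pM).
by rewrite (bformC _ _ sM) bform_invmx // -mxtrace_tr trmx_mul trmxK -qform_invmx.
Qed.

Lemma mxtrace_gram_cs S Y : symmx S -> psdmx S ->
  \tr (gram g *m (Y *m S)) ^+ 2 <= \tr (gram g *m (Y *m S *m Y^T)) * \tr (gram g *m S).
Proof.
move=> sS pS; apply: quadratic_ge0_discr => [|l]; first exact: mxtrace_gram_ge0.
have := mxtrace_gram_ge0 (psdmx_congr (Y - l%:M) pS).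
have sym : \tr (gram g *m (S *m Y^T)) = \tr (gram g *m (Y *m S)).
  by rewrite -mxtrace_tr !trmx_mul trmxK sS symmx_gram mxtrace_mulC.
rewrite linearB /= tr_scalar_mx !(mulmxBl, mulmxBr) !(mul_scalar_mx, mul_mx_scalar).
rewrite -scalemxAl scalerA -!scalemxAr !raddfB /= !mxtraceZ sym expr2; lra.
Qed.
End Gram.

Section Barrier.
Variables (R : realFieldType) (n : nat) (K J : finType).
Variables (ga : K -> 'rV[R]_n) (gx : J -> 'rV[R]_n).
Local Notation A := (gram ga).
Local Notation X := (gram gx).
Implicit Types (M : 'M[R]_n).

Lemma pdmx_sub_gram M s : symmx M -> pdmx M -> s * \tr (X *m invmx M) < 1 ->
  pdmx (M - s *: X).
Proof.
move=> sM pM scM y y0; rewrite qformB qformZ.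
have XM := qform_gram_le_mxtrace gx y sM pM.
have := pM y y0; have := psdmx_gram gx y.
have [s_le0|s_gt0] := leP s 0; first by nra.
have : s * qform X y <= s * (\tr (X *m invmx M) * qform M y) by rewrite ler_pM2l.
nra.
Qed.

(* Expand [invmx (M - s X)] by the resolvent identity; the second-order term is
   bounded using [X N^-1 X <= c / (1 - s c) X]. *)
Lemma mxtrace_invmx_sub_gram_le M s : symmx M -> pdmx M ->
  let c := \tr (X *m invmx M) in
  let T := \tr (A *m (invmx M *m X *m invmx M)) in
  s * c < 1 -> \tr (A *m invmx (M - s *: X)) <= \tr (A *m invmx M) + s * T / (1 - s * c).
Proof.
move=> sM pM c T scM; set N := M - s *: X.
have sX := symmx_gram gx; have pX := psdmx_gram gx.
have sN : symmx N by rewrite /symmx /N linearB linearZ /= sM sX.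
have pN : pdmx N := pdmx_sub_gram sM pM scM.
have sc_gt0 : 0 < 1 - s * c by rewrite subr_gt0.
have c0 : 0 <= c := mxtrace_gram_ge0 gx (pdmx_psdmx (pdmx_inv sM pM)).
have XN : forall y, qform X y <= c / (1 - s * c) * qform N y.
  move=> y; have := qform_gram_le_mxtrace gx y sM pM; rewrite -/c.
  rewrite mulrAC ler_pdivlMr // /N qformB qformZ; lra.
have XNX : psdmx (c / (1 - s * c) *: X - X *m invmx N *m X).
  move=> z; rewrite qformB qformZ subr_ge0.
  by apply: qform_mul_invmx_le => //; apply: divr_ge0 => //; apply: ltW.
have W_le := mxtrace_gram_congr_le ga (invmx M) XNX.
rewrite trmx_inv sM -scalemxAr -scalemxAl -scalemxAr mxtraceZ -/T in W_le.
rewrite (invmx_resolvent (pdmx_unit pM) (pdmx_unit pN)).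
have -> : M - N = s *: X by rewrite /N opprB addrC subrK.
rewrite !mulmxDr !mxtraceD.
have -> : invmx M *m (s *: X) *m invmx M = s *: (invmx M *m X *m invmx M).
  by rewrite -scalemxAr -scalemxAl.
have -> : invmx M *m (s *: X) *m invmx N *m (s *: X) *m invmx M
    = s ^+ 2 *: (invmx M *m (X *m invmx N *m X) *m invmx M).
  by do 4 rewrite -?scalemxAr -?scalemxAl; rewrite scalerA expr2 !mulmxA.
rewrite -!scalemxAr !mxtraceZ -/T.
have := ler_wpM2l (sqr_ge0 s) W_le.
have -> : s * T / (1 - s * c) = s * T + s ^+ 2 * (c / (1 - s * c) * T).
  by field; rewrite gt_eqF.
lra.
Qed.
End Barrier.

Lemma barrier_upper_arith (R : realFieldType) (t c T D : R) :
  0 < t -> 0 <= T -> 0 < D -> T / D + c < t^-1 ->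
  t * c < 1 /\ t * T / (1 - t * c) <= D.
Proof.
move=> t_gt0 T_ge0 D_gt0; rewrite -(ltr_pM2r (mulr_gt0 t_gt0 D_gt0)).
have -> : (T / D + c) * (t * D) = t * T + t * c * D by field; rewrite gt_eqF.
rewrite mulrA mulVf ?gt_eqF // mul1r => h.
have tT_ge0 : 0 <= t * T by apply: mulr_ge0 => //; apply: ltW.
have tc_lt1 : t * c < 1 by rewrite -(ltr_pM2r D_gt0) mul1r; lra.
by split => //; rewrite ler_pdivrMr ?subr_gt0 //; lra.
Qed.

Lemma barrier_lower_arith (R : realFieldType) (t c T D : R) :
  0 < t -> 0 <= c -> 0 < D -> t^-1 <= T / D - c ->
  - t * T / (1 - - t * c) <= - D.
Proof.
move=> t_gt0 c_ge0 D_gt0; rewrite -(ler_pM2r (mulr_gt0 t_gt0 D_gt0)).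
have -> : (T / D - c) * (t * D) = t * T - t * c * D by field; rewrite gt_eqF.
rewrite mulrA mulVf ?gt_eqF // mul1r => h.
have tc_ge0 : 0 <= t * c by apply: mulr_ge0 => //; apply: ltW.
rewrite !mulNr opprK lerN2 ler_pdivlMr; lra.
Qed.

Section Potential.
Variables (R : realFieldType) (n : nat) (I J : finType) (g : I -> J -> 'rV[R]_n).
Implicit Types (M : 'M[R]_n).
Local Notation pairs := (fun p : I * J => g p.1 p.2).
Local Notation total := (gram pairs).

Lemma total_sum : total = \sum_i gram (g i).
Proof. by rewrite /gram pair_bigA. Qed.

(* The barrier potential of Batson-Spielman-Srivastava measured against [total]
   instead of the identity: in coordinates where [total] is the identity it is
   their Tr (M^-1), and no square root of [total] is ever needed. *)
Definition pot M := \tr (total *m invmx M).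
Definition dpot M := \tr (total *m (invmx M *m total *m invmx M)).
Definition curv M i := \tr (total *m (invmx M *m gram (g i) *m invmx M)).
Definition load M i := \tr (gram (g i) *m invmx M).

Lemma sum_curv M : \sum_i curv M i = dpot M.
Proof.
by rewrite /dpot [X in _ *m X *m _]total_sum mulmx_sumr mulmx_suml mulmx_sumr raddf_sum.
Qed.

Lemma sum_load M : \sum_i load M i = pot M.
Proof. by rewrite /pot total_sum mulmx_suml raddf_sum. Qed.

Lemma curv_ge0 M i : symmx M -> 0 <= curv M i.
Proof.
move=> sM; rewrite /curv -{2}(symmx_inv sM).
exact/mxtrace_gram_ge0/psdmx_congr/psdmx_gram.
Qed.

Lemma load_ge0 M i : symmx M -> pdmx M -> 0 <= load M i.
Proof. by move=> sM pM; apply/mxtrace_gram_ge0/pdmx_psdmx/pdmx_inv. Qed.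

Lemma pot_add_le M N d : symmx M -> symmx N -> pdmx M -> pdmx N ->
  M - N = d *: total -> pot M + d * dpot M <= pot N.
Proof.
move=> sM sN pM pN eMN.
rewrite /pot /dpot (invmx_resolvent (pdmx_unit pM) (pdmx_unit pN)) eMN !mulmxDr !mxtraceD.
have -> : invmx M *m (d *: total) *m invmx M = d *: (invmx M *m total *m invmx M).
  by rewrite -scalemxAr -scalemxAl.
rewrite -scalemxAr mxtraceZ lerDl.
have -> : invmx M *m (d *: total) *m invmx N *m (d *: total) *m invmx M
    = invmx M *m (d *: total) *m invmx N *m (invmx M *m (d *: total))^T.
  by rewrite trmx_mul [(d *: _)^T]linearZ /= symmx_gram (symmx_inv sM) !mulmxA.
exact/mxtrace_gram_ge0/psdmx_congr/pdmx_psdmx/pdmx_inv.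
Qed.

Lemma dpot_ge_lower_gap M0 M d : symmx M0 -> symmx M -> pdmx M0 -> pdmx M -> 0 < d ->
  M0 - M = d *: total -> d * pot M0 <= 1 ->
  (pot M - pot M0) / d + (pot M - pot M0) ^+ 2 <= dpot M.
Proof.
move=> sM0 sM pM0 pM d_gt0 eM d_pot.
have uM := pdmx_unit pM; have uM0 := pdmx_unit pM0.
have sA : symmx total := symmx_gram pairs.
set S := invmx M; set S0 := invmx M0.
have eS1 : S - S0 = d *: (S *m total *m S0).
  rewrite scalemxAl scalemxAr -eM mulmxBr mulmxBl -(mulmxA S M0 S0) /S /S0.
  by rewrite mulmxV // mulmx1 mulVmx // mul1mx.
have eS2 : S - S0 = d *: (S0 *m total *m S).
  rewrite scalemxAl scalemxAr -eM mulmxBr mulmxBl -(mulmxA S0 M S) /S /S0.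
  by rewrite mulVmx // mul1mx mulmxV // mulmx1.
set beta := \tr (total *m (S *m total *m S0)).
set alpha := \tr (total *m (S *m total *m S0 *m total *m S)).
have gapE : pot M - pot M0 = d * beta.
  by rewrite /pot -raddfB /= -mulmxBr -/S -/S0 eS1 -scalemxAr mxtraceZ.
have dpotE : dpot M = beta + d * alpha.
  rewrite /dpot -/S.
  have -> : S *m total *m S = S *m total *m S0 + S *m total *m (S - S0).
    by rewrite mulmxBr addrC subrK.
  by rewrite eS2 mulmxDr mxtraceD -!scalemxAr mxtraceZ /beta /alpha !mulmxA.
have pS0 : psdmx S0 := pdmx_psdmx (pdmx_inv sM0 pM0).
have cs : beta ^+ 2 <= alpha * pot M0.
  have := mxtrace_gram_cs pairs (S *m total) (symmx_inv sM0) pS0.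
  by rewrite trmx_mul sA (symmx_inv sM) /beta /alpha /pot !mulmxA.
have alpha_ge0 : 0 <= alpha.
  have := mxtrace_gram_ge0 pairs (psdmx_congr (S *m total) pS0).
  by rewrite trmx_mul sA (symmx_inv sM) /alpha !mulmxA.
rewrite dpotE gapE exprMn.
have -> : d * beta / d = beta by field; rewrite gt_eqF.
have := ler_wpM2l (sqr_ge0 d) cs.
have : d * alpha * (d * pot M0) <= d * alpha.
  by apply: ler_piMr => //; apply: mulr_ge0 => //; apply: ltW.
have -> : d ^+ 2 * (alpha * pot M0) = d * alpha * (d * pot M0) by ring.
lra.
Qed.

(* The functionals U_A and L_A of BSS for the summand [gram (g i)]: when
   [upper_score < 1/t <= lower_score], adding [t *: gram (g i)] and shifting
   both barriers does not increase either potential. *)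
Definition upper_score M0 d i :=
  curv (M0 + d *: total) i / (pot M0 - pot (M0 + d *: total)) + load (M0 + d *: total) i.

Definition lower_score M0 d i :=
  curv (M0 - d *: total) i / (pot (M0 - d *: total) - pot M0) - load (M0 - d *: total) i.

Section PositiveTotal.
Hypotheses (n_gt0 : (0 < n)%N) (pd_total : pdmx total).

Lemma dpot_gt0 M : symmx M -> pdmx M -> 0 < dpot M.
Proof.
move=> sM pM; rewrite /dpot -{2}(symmx_inv sM).
apply: mxtrace_gram_gt0 (pdmx_neq0 n_gt0 pd_total) _.
by apply: pdmx_congr pd_total _; rewrite unitmx_inv; apply: pdmx_unit.
Qed.

Lemma pot_scale a : 0 < a -> pot (a *: total) = n%:R / a.
Proof.
move=> a_gt0; rewrite /pot invmxZ ?unitmxZ ?unitfE ?gt_eqF ?pdmx_unit //.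
by rewrite -scalemxAr mxtraceZ mulmxV ?pdmx_unit // mxtrace1 mulrC.
Qed.

Section Upper.
Variables (M0 : 'M[R]_n) (d : R).
Hypotheses (sM0 : symmx M0) (pM0 : pdmx M0) (d_gt0 : 0 < d).

Let sM : symmx (M0 + d *: total).
Proof. by rewrite /symmx linearD linearZ /= sM0 symmx_gram. Qed.

Let pM : pdmx (M0 + d *: total).
Proof.
move=> y y0; rewrite qformD qformZ; apply: ltr_wpDr; last exact: pM0.
by apply: mulr_ge0; [exact: ltW | exact: psdmx_gram].
Qed.

Let gap_ge : d * dpot (M0 + d *: total) <= pot M0 - pot (M0 + d *: total).
Proof.
have := pot_add_le sM sM0 pM pM0 (_ : _ = d *: total); rewrite addrAC subrr add0r.
by move=> /(_ erefl); lra.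
Qed.

Let gap_gt0 : 0 < pot M0 - pot (M0 + d *: total).
Proof. exact: lt_le_trans (mulr_gt0 d_gt0 (dpot_gt0 sM pM)) gap_ge. Qed.

Lemma upper_score_ge0 i : 0 <= upper_score M0 d i.
Proof.
by apply: addr_ge0; [apply: divr_ge0; [exact: curv_ge0 | exact: ltW] | exact: load_ge0].
Qed.

Lemma sum_upper_score_le : \sum_i upper_score M0 d i <= d^-1 + pot M0.
Proof.
rewrite /upper_score big_split /= -mulr_suml sum_curv sum_load.
have : dpot (M0 + d *: total) / (pot M0 - pot (M0 + d *: total)) <= d^-1.
  rewrite ler_pdivrMr // -(ler_pM2l d_gt0) mulrA mulfV ?gt_eqF // mul1r.
  exact: gap_ge.
move: gap_gt0; set q := dpot _ / _; lra.
Qed.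

Lemma upper_step i t : 0 < t -> upper_score M0 d i < t^-1 ->
  pdmx (M0 + d *: total - t *: gram (g i)) /\
  pot (M0 + d *: total - t *: gram (g i)) <= pot M0.
Proof.
move=> t_gt0 ut.
have [tc_lt1 tT_le] := barrier_upper_arith t_gt0 (curv_ge0 i sM) gap_gt0 ut.
split; first exact: pdmx_sub_gram.
move: tT_le; rewrite /pot /curv /load => tT_le.
apply: le_trans (mxtrace_invmx_sub_gram_le pairs sM pM tc_lt1) _; lra.
Qed.

End Upper.

Section Lower.
Variables (M0 : 'M[R]_n) (d : R).
Hypotheses (sM0 : symmx M0) (pM0 : pdmx M0) (d_gt0 : 0 < d) (d_pot : d * pot M0 < 1).

Let sM : symmx (M0 - d *: total).
Proof. by rewrite /symmx linearB linearZ /= sM0 symmx_gram. Qed.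

Let pM : pdmx (M0 - d *: total) := pdmx_sub_gram sM0 pM0 d_pot.

Let eM : M0 - (M0 - d *: total) = d *: total.
Proof. by rewrite opprB addrC subrK. Qed.

Let gap_gt0 : 0 < pot (M0 - d *: total) - pot M0.
Proof.
have := pot_add_le sM0 sM pM0 pM eM; have := mulr_gt0 d_gt0 (dpot_gt0 sM0 pM0); lra.
Qed.

Lemma sum_lower_score_ge : d^-1 - pot M0 <= \sum_i lower_score M0 d i.
Proof.
rewrite /lower_score big_split /= sumrN -mulr_suml sum_curv sum_load.
have := dpot_ge_lower_gap sM0 sM pM0 pM d_gt0 eM (ltW d_pot).
move: gap_gt0; set D := pot (M0 - d *: total) - pot M0 => D_gt0 h.
have : d^-1 + D <= dpot (M0 - d *: total) / D.
  rewrite ler_pdivlMr //.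
  have -> : (d^-1 + D) * D = D / d + D ^+ 2 by rewrite expr2; field; rewrite gt_eqF.
  exact: h.
rewrite /D; lra.
Qed.

Lemma lower_step i t : 0 < t -> t^-1 <= lower_score M0 d i ->
  pdmx (M0 - d *: total + t *: gram (g i)) /\
  pot (M0 - d *: total + t *: gram (g i)) <= pot M0.
Proof.
move=> t_gt0 lt.
have c_ge0 := load_ge0 i sM pM.
have tc : - t * load (M0 - d *: total) i < 1.
  by rewrite mulNr; have := mulr_ge0 (ltW t_gt0) c_ge0; lra.
have -> : M0 - d *: total + t *: gram (g i) = M0 - d *: total - (- t) *: gram (g i).
  by rewrite scaleNr opprK.
split; first exact: pdmx_sub_gram.
have := barrier_lower_arith t_gt0 c_ge0 gap_gt0 lt; rewrite /pot /curv /load => tT_le.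
apply: le_trans (mxtrace_invmx_sub_gram_le pairs sM pM tc) _; lra.
Qed.

End Lower.

End PositiveTotal.
End Potential.

Section BSS.
Variables (R : realFieldType) (n : nat) (I J : finType) (g : I -> J -> 'rV[R]_n).
Local Notation total := (gram (fun p : I * J => g p.1 p.2)).
Hypothesis pd_total : pdmx total.
Implicit Types (B : 'M[R]_n).

Section Step.
Variables (dU dL eU eL : R).
Hypotheses (n_gt0 : (0 < n)%N) (dU_gt0 : 0 < dU) (dL_gt0 : 0 < dL) (dL_eL : dL * eL < 1)
  (scores_gap : dU^-1 + eU < dL^-1 - eL).

Definition bss_inv B u l :=
  [/\ symmx B, pdmx (u *: total - B), pdmx (B - l *: total),
      pot g (u *: total - B) <= eU & pot g (B - l *: total) <= eL].

Lemma bss_step B u l : bss_inv B u l ->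
  exists i t, 0 < t /\ bss_inv (B + t *: gram (g i)) (u + dU) (l + dL).
Proof.
case=> sB pU pL potU potL.
set M0U := u *: total - B; set M0L := B - l *: total.
have sM0U : symmx M0U by rewrite /symmx /M0U linearB linearZ /= sB symmx_gram.
have sM0L : symmx M0L by rewrite /symmx /M0L linearB linearZ /= sB symmx_gram.
have dL_pot : dL * pot g M0L < 1 by apply: le_lt_trans dL_eL; rewrite ler_pM2l.
have [i score_lt] : exists i, upper_score g M0U dU i < lower_score g M0L dL i.
  apply/existsP; apply: contraLR scores_gap => /existsPn scores_ge.
  have := sum_upper_score_le n_gt0 pd_total sM0U pU dU_gt0.
  have := sum_lower_score_ge n_gt0 pd_total sM0L pL dL_gt0 dL_pot.
  have : \sum_i lower_score g M0L dL i <= \sum_i upper_score g M0U dU i.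
    by apply: ler_sum => i _; rewrite leNgt; apply: scores_ge.
  rewrite -leNgt; set sL := \sum_i _; set sU := \sum_i _; lra.
set t := (lower_score g M0L dL i)^-1.
have t_gt0 : 0 < t.
  have := upper_score_ge0 n_gt0 pd_total sM0U pU dU_gt0 i.
  by rewrite invr_gt0 => /le_lt_trans; apply.
have ut : upper_score g M0U dU i < t^-1 by rewrite invrK.
have lt : t^-1 <= lower_score g M0L dL i by rewrite invrK.
have [pU' potU'] := upper_step n_gt0 pd_total sM0U pU dU_gt0 t_gt0 ut.
have [pL' potL'] := lower_step n_gt0 pd_total sM0L pL dL_gt0 dL_pot t_gt0 lt.
have eU' : M0U + dU *: total - t *: gram (g i) = (u + dU) *: total - (B + t *: gram (g i)).
  by apply/matrixP => a b; rewrite !mxE; ring.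
have eL' : M0L - dL *: total + t *: gram (g i) = B + t *: gram (g i) - (l + dL) *: total.
  by apply/matrixP => a b; rewrite !mxE; ring.
exists i, t; split => //; split; rewrite -?eU' -?eL' //; try lra.
by rewrite /symmx linearD linearZ /= sB symmx_gram.
Qed.

Lemma bss_iterate u0 l0 : bss_inv 0 u0 l0 -> forall k : nat,
  exists s : I -> R, [/\ (forall i, 0 <= s i), (#|[set i | s i != 0%R]| <= k)%N &
    bss_inv (\sum_i s i *: gram (g i)) (u0 + k%:R * dU) (l0 + k%:R * dL)].
Proof.
move=> inv0; elim=> [|k [s [s_ge0 s_supp s_inv]]].
  exists (fun _ => 0); split => //.
    by rewrite leqn0 cards_eq0; apply/eqP/setP => i; rewrite !inE eqxx.
  by rewrite !mul0r !addr0 big1 // => i _; rewrite scale0r.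
have [i [t [t_gt0 inv']]] := bss_step s_inv.
exists (fun j => s j + (j == i)%:R * t); split.
- by move=> j; apply: addr_ge0 => //; apply: mulr_ge0 => //; apply: ltW.
- apply: (@leq_trans #|i |: [set j | s j != 0]|).
    apply: subset_leq_card; apply/subsetP => j; rewrite !inE.
    by case: (eqVneq j i) => [->|_]; rewrite ?eqxx //= mul0r addr0.
  by rewrite cardsU1 -add1n leq_add // leq_b1.
- rewrite -[k.+1]addn1 natrD !mulrDl !mul1r !addrA.
  under eq_bigr do rewrite scalerDl -scalerA.
  rewrite big_split /= [X in _ + X](bigD1 i) //= eqxx scale1r [X in _ + (_ + X)]big1 ?addr0 // => j.
  by move=> /negbTE ->; rewrite scale0r.
Qed.

End Step.

Lemma bss_pd (k : nat) : (3 <= k)%N ->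
  exists s : I -> R, [/\ (forall i, 0 <= s i), (#|[set i | s i != 0%R]| <= k * k * n)%N &
    forall y, k%:R * (k%:R - 1) * qform total y <= qform (\sum_i s i *: gram (g i)) y
           /\ qform (\sum_i s i *: gram (g i)) y <= (k%:R + 1) * (k%:R + 4) * qform total y].
Proof.
move=> k3; have [n0|n_gt0] := posnP n.
  exists (fun=> 0); split => //.
    by rewrite n0 muln0 leqn0 cards_eq0; apply/eqP/setP => i; rewrite !inE eqxx.
  move=> y; have -> : y = 0 by apply/matrixP => ? [j hj]; exfalso; move: hj; rewrite n0.
  by rewrite !qform0 !mulr0.
(* Barriers start at k + 4 and -k and move by (k + 4)/(k n) and 1/n per step,
   so after k^2 n steps they sit at (k + 1)(k + 4) and k (k - 1). *)
set kk : R := k%:R; set nn : R := n%:R.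
have kk3 : 3 <= kk by rewrite /kk (ler_nat R 3 k).
have nn_gt0 : 0 < nn by rewrite /nn ltr0n.
have dU_gt0 : 0 < (kk + 4) / (kk * nn) by apply: divr_gt0; [lra | apply: mulr_gt0; lra].
have dL_gt0 : 0 < nn^-1 by rewrite invr_gt0.
have dL_eL : nn^-1 * (nn / kk) < 1.
  by rewrite mulKf ?gt_eqF // invf_lt1 //; lra.
have scores_gap : ((kk + 4) / (kk * nn))^-1 + nn / (kk + 4) < nn^-1^-1 - nn / kk.
  rewrite -subr_gt0.
  have -> : nn^-1^-1 - nn / kk - (((kk + 4) / (kk * nn))^-1 + nn / (kk + 4))
      = nn * (2 * kk - 4) / (kk * (kk + 4)).
    by field; rewrite !gt_eqF //; lra.
  by apply: divr_gt0; apply: mulr_gt0; lra.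
have inv0 : bss_inv (nn / (kk + 4)) (nn / kk) 0 (kk + 4) (- kk).
  rewrite /bss_inv subr0 sub0r scaleNr opprK !pot_scale //; try lra.
  by split => //; [rewrite /symmx trmx0 | apply: pdmx_scale => //; lra ..].
have [s [s_ge0 s_supp s_inv]] := bss_iterate n_gt0 dU_gt0 dL_gt0 dL_eL scores_gap inv0 (k * k * n).
exists s; split => // y; case: s_inv => _ pu pl _ _.
have eu : kk + 4 + (k * k * n)%:R * ((kk + 4) / (kk * nn)) = (kk + 1) * (kk + 4).
  by rewrite !natrM -/kk -/nn; field; rewrite !gt_eqF //; lra.
have el : - kk + (k * k * n)%:R * nn^-1 = kk * (kk - 1).
  by rewrite !natrM -/kk -/nn; field; rewrite gt_eqF.
move: (pdmx_psdmx pu y) (pdmx_psdmx pl y).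
by rewrite eu el !qformB !qformZ !subr_ge0.
Qed.
End BSS.

Lemma eq_gram (R : realFieldType) (n : nat) (J : finType) (h1 h2 : J -> 'rV[R]_n) :
  (forall j, h1 j = h2 j) -> gram h1 = gram h2.
Proof. by move=> h12; apply: eq_bigr => j _; rewrite h12. Qed.

Lemma qform_gram_mulmx (R : realFieldType) (m n : nat) (J : finType)
    (h : J -> 'rV[R]_m) (B : 'M[R]_(m, n)) y :
  qform (gram (fun j => h j *m B)) y = qform (gram h) (y *m B^T).
Proof.
have -> : gram (fun j => h j *m B) = B^T *m gram h *m B^T^T.
  rewrite trmxK /gram mulmx_sumr mulmx_suml; apply: eq_bigr => j _.
  by rewrite trmx_mul !mulmxA.
exact: qform_congr.
Qed.

Lemma gram_factor_pd (R : realFieldType) (n : nat) (K : finType) (h : K -> 'rV[R]_n) :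
  exists m (B : 'M[R]_(m, n)) (h' : K -> 'rV[R]_m),
    [/\ (m <= n)%N, forall p, h p = h' p *m B & pdmx (gram h')].
Proof.
pose G : 'M[R]_(#|K|, n) := \matrix_(q < #|K|) h (enum_val q).
pose B := row_base G; pose H := G *m pinvmx B.
have HB : H *m B = G by apply: mulmxKpV; rewrite eq_row_base.
exists (\rank G), B, (fun p => row (enum_rank p) H); split.
- exact: rank_leq_col.
- by move=> p; rewrite -row_mul HB rowK enum_rankK.
have fullH : row_full H by rewrite /row_full eqn_leq rank_leq_col -{1}HB mxrankM_maxl.
move=> y y0.
have Hy : H *m y^T != 0.
  apply: contra y0 => /eqP Hy0; have [X XH] := row_fullP fullH; apply/eqP.
  by rewrite -(trmxK y) -(mul1mx y^T) -XH -mulmxA Hy0 mulmx0 trmx0.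
have [q Hyq] : exists q, (H *m y^T) q 0 != 0.
  apply/existsP; apply: contraR Hy => /existsPn Hy0; apply/eqP/matrixP => i j.
  by rewrite (ord1 j) [RHS]mxE; move: (Hy0 i); rewrite negbK => /eqP.
rewrite qform_gram (bigD1 (enum_val q)) //= enum_valK.
apply: ltr_wpDr; first by apply: sumr_ge0 => p _; apply: sqr_ge0.
by rewrite trace_mx11 -row_mul mxE lt_def sqrf_eq0 Hyq sqr_ge0.
Qed.

Lemma bss_sparsify (R : realFieldType) (n : nat) (I J : finType) (g : I -> J -> 'rV[R]_n)
    (k : nat) : (3 <= k)%N ->
  exists s : I -> R, [/\ (forall i, 0 <= s i), (#|[set i | s i != 0%R]| <= k * k * n)%N &
    forall y,
      k%:R * (k%:R - 1) * qform (gram (fun p : I * J => g p.1 p.2)) y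
        <= qform (\sum_i s i *: gram (g i)) y /\
      qform (\sum_i s i *: gram (g i)) y
        <= (k%:R + 1) * (k%:R + 4) * qform (gram (fun p : I * J => g p.1 p.2)) y].
Proof.
move=> k3; have [m [B [h [le_mn gB pd_h]]]] := gram_factor_pd (fun p : I * J => g p.1 p.2).
pose g' i j := h (i, j).
have pd_total : pdmx (gram (fun p : I * J => g' p.1 p.2)).
  by rewrite (@eq_gram _ _ _ _ h) // => -[].
have [s [s_ge0 s_supp s_approx]] := bss_pd pd_total k3.
exists s; split => //; first by apply: leq_trans s_supp _; rewrite leq_mul2l le_mn orbT.
have summandE i y : qform (gram (g i)) y = qform (gram (g' i)) (y *m B^T).
  by rewrite -qform_gram_mulmx (@eq_gram _ _ _ _ _ (fun j => gB (i, j))).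
have totalE y : qform (gram (fun p : I * J => g p.1 p.2)) y
    = qform (gram (fun p : I * J => g' p.1 p.2)) (y *m B^T).
  by rewrite (eq_gram gB) qform_gram_mulmx (@eq_gram _ _ _ _ h) // => -[].
have combE (t : I -> R) y : qform (\sum_i t i *: gram (g i)) y
    = qform (\sum_i t i *: gram (g' i)) (y *m B^T).
  by rewrite !qform_sum; apply: eq_bigr => i _; rewrite !qformZ summandE.
by move=> y; rewrite !totalE !combE; apply: s_approx.
Qed.

Lemma exists_bss_degree (R : archiRealFieldType) (eps : R) : 0 < eps -> eps < 1 ->
  exists k : nat, [/\ (3 <= k)%N, 4 < eps * k%:R & eps * k%:R <= 7].
Proof.
move=> e_gt0 e_lt1.
have t_le : (Num.Def.trunc (4 / eps))%:R <= 4 / eps by rewrite truncn_le divr_ge0 // ltW.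
move: (truncnS_gt (4 / eps)) t_le; move: (Num.Def.trunc _) => t t_gt t_le; exists t.+3.
have e4 : eps * (4 / eps) = 4 by rewrite mulrC divfK ?gt_eqF.
have h1 : eps * (4 / eps) < eps * t.+1%:R by rewrite ltr_pM2l.
have h2 : eps * t%:R <= eps * (4 / eps) by rewrite ler_pM2l.
have t3 : t.+3%:R = t%:R + 3 :> R by rewrite -addn3 natrD.
rewrite e4 -[t.+1%:R]natr1 mulrDr mulr1 in h1; rewrite e4 in h2.
by rewrite t3 mulrDr; split => //; lra.
Qed.

Lemma bss_ratio_bounds (R : realFieldType) (kk eps : R) : 3 <= kk -> 4 < eps * kk ->
  let lo := kk * (kk - 1) in let hi := (kk + 1) * (kk + 4) in
  1 - eps <= 2 * lo / (lo + hi) /\ 2 * hi / (lo + hi) <= 1 + eps.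
Proof.
move=> kk3 ek lo hi.
have den_gt0 : 0 < lo + hi by rewrite /lo /hi; nra.
have slack : (6 * kk + 4) / (lo + hi) <= eps.
  by rewrite ler_pdivrMr // /lo /hi; nra.
have -> : 2 * lo / (lo + hi) = 1 - (6 * kk + 4) / (lo + hi).
  by rewrite /lo /hi; field; rewrite gt_eqF.
have -> : 2 * hi / (lo + hi) = 1 + (6 * kk + 4) / (lo + hi).
  by rewrite /lo /hi; field; rewrite gt_eqF.
lra.
Qed.

Lemma gram_sparsify (R : archiRealFieldType) (n : nat) (I J : finType)
    (g : I -> J -> 'rV[R]_n) (eps : R) : 0 < eps -> eps < 1 ->
  exists s : I -> R, [/\ (forall i, 0 <= s i),
    #|[set i | s i != 0%R]|%:R <= 49 * n%:R / eps ^+ 2 &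
    forall y,
      (1 - eps) * qform (gram (fun p : I * J => g p.1 p.2)) y
        <= qform (\sum_i s i *: gram (g i)) y /\
      qform (\sum_i s i *: gram (g i)) y
        <= (1 + eps) * qform (gram (fun p : I * J => g p.1 p.2)) y].
Proof.
move=> e_gt0 e_lt1; have [k [k3 ek_gt4 ek_le7]] := exists_bss_degree e_gt0 e_lt1.
have [s [s_ge0 s_supp s_approx]] := bss_sparsify g k3.
have kk3 : 3 <= k%:R :> R by rewrite (ler_nat R 3 k).
have [lo_ratio hi_ratio] := bss_ratio_bounds kk3 ek_gt4.
move: lo_ratio hi_ratio s_approx.
set lo := k%:R * (k%:R - 1); set hi := (k%:R + 1) * (k%:R + 4) => lo_ratio hi_ratio s_approx.
have lohi_gt0 : 0 < lo + hi by rewrite /lo /hi; nra.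
set sigma := 2 / (lo + hi).
have sigma_gt0 : 0 < sigma by rewrite divr_gt0.
exists (fun i => sigma * s i); split.
- by move=> i; apply: mulr_ge0 => //; apply: ltW.
- have -> : [set i | sigma * s i != 0] = [set i | s i != 0].
    by apply/setP => i; rewrite !inE mulf_eq0 gt_eqF.
  apply: le_trans (_ : (k * k * n)%:R <= _); first by rewrite ler_nat.
  have ek_ge0 : 0 <= eps * k%:R by lra.
  have k_eps : k%:R * k%:R * eps ^+ 2 <= 49 :> R.
    have := ler_pM ek_ge0 ek_ge0 ek_le7 ek_le7; rewrite expr2; lra.
  rewrite ler_pdivlMr ?exprn_gt0 // !natrM.
  have := ler_wpM2r (ler0n R n) k_eps; lra.
move=> y; have [le_lo le_hi] := s_approx y.
under eq_bigr do rewrite -scalerA.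
rewrite -scaler_sumr qformZ.
have Q_ge0 : 0 <= qform (gram (fun p : I * J => g p.1 p.2)) y by apply: psdmx_gram.
move: le_lo le_hi Q_ge0.
set Q := qform (gram _) y; set S := qform (\sum_i _) y => le_lo le_hi Q_ge0.
rewrite [2 * lo / _]mulrAC -/sigma in lo_ratio.
rewrite [2 * hi / _]mulrAC -/sigma in hi_ratio.
have := ler_wpM2r Q_ge0 lo_ratio; have := ler_wpM2r Q_ge0 hi_ratio.
have := ler_wpM2l (ltW sigma_gt0) le_lo; have := ler_wpM2l (ltW sigma_gt0) le_hi.
by move=> *; split; nra.
Qed.

Section SumOfSquares.
Variables (D : finType) (P : binpred D).

Definition zeroset a := [set b | ~~ P a b].

Lemma restr_singleton_pair a a' b c : a != a' -> ~~ P a b -> ~~ P a' b -> P a c -> ~~ P a' c ->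
  restr_singleton P [set a; a'] [set b; c].
Proof.
move=> aa' /negbTE Pab /negbTE Pa'b Pac /negbTE Pa'c; rewrite /restr_singleton.
suff -> : [set bc in setX [set a; a'] [set b; c] | P bc.1 bc.2] = [set (a, c)].
  by rewrite cards1.
apply/setP => -[x y]; rewrite !inE /= xpair_eqE.
have [-> {x}|xa] := eqVneq x a; have [-> {y}|yc] := eqVneq y c; rewrite /= ?andbT ?andbF.
- by rewrite orbT Pac.
- by rewrite orbF; case: eqP => [->|//]; rewrite Pab.
- by rewrite orbT andbT; case: eqP => [->|//]; rewrite Pa'c.
- by rewrite orbF; case: (x =P a') => [->|//]; case: (y =P b) => [->|//]; rewrite Pa'b.
Qed.

Hypothesis no_singleton :
  forall B C : {set D}, #|B| = 2%N -> #|C| = 2%N -> ~~ restr_singleton P B C.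

Lemma zeroset_sub a a' b : b \in zeroset a -> b \in zeroset a' ->
  zeroset a' \subset zeroset a.
Proof.
rewrite !inE => Pab Pa'b; apply/subsetP => c; rewrite !inE => Pa'c.
apply/negP => Pac.
have aa' : a != a' by apply: contraTneq Pac => ->.
have bc : b != c by apply: contraNneq Pab => ->.
have := @no_singleton [set a; a'] [set b; c]; rewrite !cards2 aa' bc.
by rewrite (restr_singleton_pair aa' Pab Pa'b Pac Pa'c) => /(_ erefl erefl).
Qed.

Lemma zeroset_eq a a' b : b \in zeroset a -> b \in zeroset a' -> zeroset a = zeroset a'.
Proof.
by move=> ba ba'; apply/eqP; rewrite eqEsubset (zeroset_sub ba ba') (zeroset_sub ba' ba).
Qed.

Definition zrow (T : {set D}) a : bool := zeroset a == T.
Definition zcol (T : {set D}) b : bool := (b \in T) && [exists a, zeroset a == T].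
Definition fullcol b : bool := [forall a, P a b].

Variable R : realFieldType.

Lemma sum_zrow a : \sum_(T : {set D}) (zrow T a)%:R = 1 :> R.
Proof.
rewrite (bigD1 (zeroset a)) //= /zrow eqxx big1 ?addr0 // => T.
by rewrite eq_sym => /negbTE ->.
Qed.

Lemma sum_zrow_zcol a b :
  \sum_(T : {set D}) (zrow T a && zcol T b)%:R = (~~ P a b)%:R :> R.
Proof.
rewrite (bigD1 (zeroset a)) //= /zrow eqxx big1 ?addr0 /=.
  by rewrite /zcol inE; case: existsP => [_|[]]; [rewrite andbT | exists a].
by move=> T; rewrite eq_sym => /negbTE ->.
Qed.

Lemma sum_zcol b : \sum_(T : {set D}) (zcol T b)%:R = (~~ fullcol b)%:R :> R.
Proof.
have zcolE T : zcol T b = [exists a, (b \in zeroset a) && (zeroset a == T)].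
  apply/andP/existsP => [[bT /existsP[a /eqP aT]]|[a /andP[ba /eqP aT]]].
    by exists a; rewrite aT bT eqxx.
  by split; [rewrite -aT | apply/existsP; exists a; rewrite aT].
case: (boolP (fullcol b)) => [/forallP Pb|/forallPn[a0 /= Pa0b]].
  rewrite big1 // => T _; rewrite zcolE.
  by case: existsP => // -[a]; rewrite inE Pb.
have ba0 : b \in zeroset a0 by rewrite inE.
rewrite (bigD1 (zeroset a0)) //= big1 ?addr0.
  by rewrite zcolE; case: existsP => // -[]; exists a0; rewrite ba0 eqxx.
move=> T; rewrite zcolE; case: existsP => // -[a /andP[ba /eqP <-]].
by rewrite (zeroset_eq ba ba0) eqxx.
Qed.

Lemma sos_decomposition a b :
  2 * (P a b)%:R =
    (fullcol b)%:R + \sum_(T : {set D}) ((zrow T a)%:R - (zcol T b)%:R) ^+ 2 :> R.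
Proof.
have sqr_bool (p q : bool) : ((p%:R - q%:R) ^+ 2 : R) = p%:R + q%:R - 2 * (p && q)%:R.
  by case: p; case: q => /=; ring.
under eq_bigr do rewrite sqr_bool.
rewrite sumrB big_split /= -mulr_sumr sum_zrow sum_zcol sum_zrow_zcol.
by case: (P a b); case: (fullcol b) => /=; ring.
Qed.

End SumOfSquares.

Lemma big_option (R : zmodType) (T : finType) (F : option T -> R) :
  \sum_(j : option T) F j = F None + \sum_(t : T) F (Some t).
Proof.
rewrite (bigD1 None) //=; congr (_ + _).
by rewrite (reindex_omap Some idfun) //=; [apply: eq_bigl => t; rewrite eqxx | case].
Qed.

Section Encoding.
Variables (R : realType) (V D : finType) (P : binpred D).
Local Notation N := #|{: V * D}|.

Definition onehot (A : V -> D) : 'rV[R]_N :=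
  \row_i (A (enum_val i).1 == (enum_val i).2)%:R.

Definition linform (f : V -> D -> R) : 'rV[R]_N := \row_i f (enum_val i).1 (enum_val i).2.

Lemma linform_onehot f A : \tr (linform f *m (onehot A)^T) = \sum_v f v (A v).
Proof.
pose F (p : V * D) := f p.1 p.2 * (A p.1 == p.2)%:R.
rewrite trace_mx11 mxE (eq_bigr (F \o enum_val)) => [|i _]; last by rewrite !mxE.
rewrite -(big_enum_val (A := predT) F) -(pair_bigA _ (fun v d => F (v, d))) /=.
apply: eq_bigr => v _; rewrite /F (bigD1 (A v)) //= eqxx mulr1 big1 ?addr0 // => d.
by rewrite eq_sym => /negbTE ->; rewrite mulr0.
Qed.

Lemma sum_delta (u : V) (F : V -> R) : \sum_v (v == u)%:R * F v = F u.
Proof.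
rewrite (bigD1 u) //= eqxx mul1r big1 ?addr0 // => v /negbTE ->.
by rewrite mul0r.
Qed.

(* A constraint c = (u, v) of weight om gives the linear forms, in the one-hot
   encoding, A |-> sqrt om * [P(-, A v) = 1] (index None) and
   A |-> sqrt om * (zrow T (A u) - zcol T (A v)) (index Some T); by
   sos_decomposition their squares add up to 2 om P(A u, A v). *)
Definition cvec (om : R) (c : V * V) (j : option {set D}) : 'rV[R]_N :=
  Num.sqrt om *: linform (fun v d => match j with
    | None => (v == c.2)%:R * (fullcol P d)%:R
    | Some T => (v == c.1)%:R * (zrow P T d)%:R - (v == c.2)%:R * (zcol P T d)%:R
    end).

Hypothesis no_singleton :
  forall B C : {set D}, #|B| = 2%N -> #|C| = 2%N -> ~~ restr_singleton P B C.

Lemma qform_cvec om c A : 0 <= om ->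
  qform (gram (cvec om c)) (onehot A) = 2 * om * (P (A c.1) (A c.2))%:R.
Proof.
move=> om_ge0; rewrite qform_gram big_option mulrAC (sos_decomposition no_singleton).
rewrite mulrDl mulr_suml; congr (_ + _); last apply: eq_bigr => T _.
  rewrite -scalemxAl mxtraceZ linform_onehot sum_delta exprMn sqr_sqrtr // mulrC.
  by case: (fullcol P _); rewrite ?expr1n ?expr0n.
by rewrite -scalemxAl mxtraceZ linform_onehot sumrB !sum_delta exprMn sqr_sqrtr // mulrC.
Qed.

Variables (Pi : {set V * V}) (w : V * V -> R).
Hypothesis w_gt0 : forall c, c \in Pi -> 0 < w c.

Definition cweight c := if c \in Pi then w c else 0.

Lemma qform_weighted_cvec (t : V * V -> R) A :
  qform (\sum_c t c *: gram (cvec (cweight c) c)) (onehot A)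
    = 2 * Val P Pi (fun c => t c * w c) A.
Proof.
rewrite qform_sum /Val mulr_sumr [RHS]big_mkcond; apply: eq_bigr => c _.
rewrite qformZ qform_cvec /cweight; last by case: ifP => // /w_gt0 /ltW.
by case: (c \in Pi) => /=; ring.
Qed.

Definition cvecs c := cvec (cweight c) c.

Lemma qform_total_cvec A :
  qform (gram (fun p : (V * V) * option {set D} => cvecs p.1 p.2)) (onehot A)
    = 2 * Val P Pi w A.
Proof.
rewrite total_sum -[X in qform X _](eq_bigr _ (fun c _ => scale1r _)) qform_weighted_cvec.
by congr (2 * _); apply: eq_bigr => c _; rewrite mul1r.
Qed.

Lemma Val_support (t : V * V -> R) A :
  Val P [set c in Pi | t c != 0] (fun c => t c * w c) A = Val P Pi (fun c => t c * w c) A.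
Proof.
rewrite /Val big_mkcond [RHS]big_mkcond; apply: eq_bigr => c _; rewrite inE.
by case: (c \in Pi); case: eqP => [->|] //=; rewrite !mul0r.
Qed.

End Encoding.

Theorem theorem8 (R : realType) (D : finType) (P : binpred D) :
  (forall B C : {set D}, #|B| = 2%N -> #|C| = 2%N -> ~~ restr_singleton P B C) ->
  exists K : R, 0 < K /\
    forall (eps : R), 0 < eps -> eps < 1 ->
    forall (V : finType) (Pi : {set V * V}) (w : V * V -> R),
      wf_instance Pi w ->
      exists (Pi' : {set V * V}) (w' : V * V -> R),
        is_sparsifier P Pi w eps Pi' w' /\
        (#|Pi'|%:R <= K * #|V|%:R / eps ^+ 2).
Proof.
move=> no_singleton.
exists (49 * #|D|.+1)%:R; split => [|eps e_gt0 e_lt1 V Pi w [_ w_gt0]]; first by rewrite ltr0n.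
have [s [s_ge0 s_supp s_approx]] := gram_sparsify (cvecs P Pi w) e_gt0 e_lt1.
exists [set c in Pi | s c != 0], (fun c => s c * w c); split; first split.
- by apply/subsetP => c; rewrite inE => /andP[].
- split=> [c|A].
    by rewrite inE => /andP[cPi sc0]; rewrite mulr_gt0 ?w_gt0 // lt_def sc0 s_ge0.
  have [lo hi] := s_approx (onehot R A).
  rewrite qform_total_cvec // qform_weighted_cvec // -Val_support in lo hi.
  by split; lra.
have supp_le : (#|[set c in Pi | s c != 0%R]| <= #|[set c | s c != 0%R]|)%N.
  by apply/subset_leq_card/subsetP => c; rewrite !inE => /andP[].
rewrite -(ler_nat R) in supp_le; apply: le_trans supp_le _; apply: le_trans s_supp _.
rewrite ler_pM2r ?invr_gt0 ?exprn_gt0 // card_prod -!natrM ler_nat.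
by rewrite -mulnA leq_mul2l [(#|V| * _)%N]mulnC leq_mul2r leqnSn !orbT.
Qed.
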